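(* Let $A$ be a ring with local units. Then $A$ is a left SF-ring if and only if for every maximal left ideal $I$ of $A$ and every $a\in I$ there exists $b\in I$ such that $ab=a$.
   Context: A ring with local units is an associative ring $A$ such that for any finitely many $a_1,\dots,a_n\in A$ there is an idempotent $e\in A$ with $\{a_1,\dots,a_n\}\subseteq eAe$. $A\text{-}\mathrm{MOD}$ denotes the category of unital left $A$-modules (those $N$ with $AN=N$), and $\mathrm{MOD}\text{-}A$ the category of unital right $A$-modules. A module $N\in A\text{-}\mathrm{MOD}$ is flat if $-\otimes_A N:\mathrm{MOD}\text{-}A\to\mathbf{Ab}$ is exact. $A$ is a left SF-ring (left simple flat ring) if every simple left $A$-module in $A\text{-}\mathrm{MOD}$ is flat in $A\text{-}\mathrm{MOD}$. *)

From HB Require Import structures.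
From mathcomp Require Import all_boot all_order all_algebra.
Set Implicit Arguments. Unset Strict Implicit. Unset Printing Implicit Defensive.
Import GRing.Theory.
Local Open Scope ring_scope.

Record rng := Rng {
  rcar :> zmodType;
  rmul : rcar -> rcar -> rcar;
  rmulA : forall a b c, rmul a (rmul b c) = rmul (rmul a b) c;
  rmulDl : forall a b c, rmul (a + b) c = rmul a c + rmul b c;
  rmulDr : forall a b c, rmul a (b + c) = rmul a b + rmul a c }.

Definition has_local_units (A : rng) : Prop :=
  forall s : seq A, exists e : A, rmul e e = e /\
    forall a, a \in s -> exists y : A, a = rmul (rmul e y) e.

Record lmod (A : rng) := LMod {
  lcar :> zmodType;
  lact : A -> lcar -> lcar;
  lactDl : forall a b m, lact (a + b) m = lact a m + lact b m;
  lactDr : forall a m n, lact a (m + n) = lact a m + lact a n;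
  lactA : forall a b m, lact (rmul a b) m = lact a (lact b m) }.

Record rmod (A : rng) := RMod {
  rmcar :> zmodType;
  ract : rmcar -> A -> rmcar;
  ractDl : forall m n a, ract (m + n) a = ract m a + ract n a;
  ractDr : forall m a b, ract m (a + b) = ract m a + ract m b;
  ractA : forall m a b, ract m (rmul a b) = ract (ract m a) b }.

(* Unital modules: A N = N (every element is a finite sum of a_i n_i). *)
Definition lunital (A : rng) (N : lmod A) : Prop :=
  forall n : N, exists s : seq (A * N), n = \sum_(p <- s) lact p.1 p.2.

Definition runital (A : rng) (X : rmod A) : Prop :=
  forall x : X, exists s : seq (X * A), x = \sum_(p <- s) ract p.1 p.2.

Definition additive_map (G H : zmodType) (f : G -> H) : Prop :=
  forall x y, f (x + y) = f x + f y.

Definition rmod_hom (A : rng) (X Y : rmod A) (f : X -> Y) : Prop :=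
  additive_map f /\ forall x a, f (ract x a) = ract (f x) a.

Definition lsubmod (A : rng) (N : lmod A) (P : N -> Prop) : Prop :=
  P 0 /\ (forall x y, P x -> P y -> P (x - y)) /\
  (forall a x, P x -> P (lact a x)).

Definition lsimple (A : rng) (N : lmod A) : Prop :=
  (exists n : N, n != 0) /\
  forall P : N -> Prop, lsubmod P -> (forall n, P n -> n = 0) \/ (forall n, P n).

Definition balanced (A : rng) (X : rmod A) (N : lmod A) (G : zmodType)
    (h : X -> N -> G) : Prop :=
  (forall x x' n, h (x + x') n = h x n + h x' n) /\
  (forall x n n', h x (n + n') = h x n + h x n') /\
  (forall x a n, h (ract x a) n = h x (lact a n)).

(* (T, b) is a tensor product X (x)_A N, by its universal property. *)
Definition is_tensor (A : rng) (X : rmod A) (N : lmod A) (T : zmodType)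
    (b : X -> N -> T) : Prop :=
  balanced b /\
  forall (G : zmodType) (h : X -> N -> G), balanced h ->
    (exists phi : T -> G, additive_map phi /\ forall x n, phi (b x n) = h x n) /\
    (forall phi psi : T -> G, additive_map phi -> additive_map psi ->
       (forall x n, phi (b x n) = h x n) -> (forall x n, psi (b x n) = h x n) ->
       forall t, phi t = psi t).

Definition exact_at (G H K : zmodType) (f : G -> H) (g : H -> K) : Prop :=
  forall y, g y = 0 <-> exists x, f x = y.

(* N is flat: - (x)_A N : MOD-A -> Ab is exact, i.e. it sends every exact
   sequence X -> Y -> Z of unital right modules to an exact sequence
   X(x)N -> Y(x)N -> Z(x)N, where the induced maps are f (x) N, g (x) N. *)
Definition flat (A : rng) (N : lmod A) : Prop :=
  forall (X Y Z : rmod A) (f : X -> Y) (g : Y -> Z),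
    runital X -> runital Y -> runital Z ->
    rmod_hom f -> rmod_hom g -> exact_at f g ->
  forall (TX TY TZ : zmodType) (bX : X -> N -> TX) (bY : Y -> N -> TY)
         (bZ : Z -> N -> TZ),
    is_tensor bX -> is_tensor bY -> is_tensor bZ ->
  forall (F : TX -> TY) (G : TY -> TZ),
    additive_map F -> additive_map G ->
    (forall x n, F (bX x n) = bY (f x) n) ->
    (forall y n, G (bY y n) = bZ (g y) n) ->
    exact_at F G.

Definition left_SF (A : rng) : Prop :=
  forall N : lmod A, lunital N -> lsimple N -> flat N.

Definition left_ideal (A : rng) (I : A -> Prop) : Prop :=
  I 0 /\ (forall x y, I x -> I y -> I (x - y)) /\
  (forall a x, I x -> I (rmul a x)).

Definition maximal_left_ideal (A : rng) (I : A -> Prop) : Prop :=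
  left_ideal I /\ (exists a, ~ I a) /\
  forall J : A -> Prop, left_ideal J -> (forall x, I x -> J x) ->
    (forall x, J x <-> I x) \/ (forall x, J x).

From HB Require Import structures.
From mathcomp Require Import all_boot all_order all_algebra.
From Stdlib Require Import Classical ClassicalEpsilon PropExtensionality FunctionalExtensionality.
Set Implicit Arguments. Unset Strict Implicit. Unset Printing Implicit Defensive.
Import GRing.Theory.
Local Open Scope ring_scope.

(* A simple unital module N is cyclic, N = A n, with I = ann(n) a maximal left
   ideal.  Under the right-unit condition, every element of Y (x) N is some y (x) n,
   and z (x) n = 0 in Z (x) N forces z in ZI.  So if g y (x) n = 0 then
   g y = sum z_i c_i with c_i in I; a common right unit b in I of the c_i gives
   g (y - y b) = 0, hence y - y b = f x and y (x) n = (y - y b) (x) n = F (x (x) n).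
   Conversely, Y (x) A/I is Y/YI.  Flatness of A/I applied to the injection
   A/r.ann(a) -> A, x |-> a x, kills [e] (x) [e], whose image is a + AI = 0 for a
   local unit e of a in I; unfolding, a = a b with b = sum x_i c_i in I. *)

Record subgrp (Z : zmodType) := SubGrp {
  sg_mem :> Z -> Prop;
  sg0 : sg_mem 0;
  sgB : forall x y, sg_mem x -> sg_mem y -> sg_mem (x - y) }.

Section Quotient.
Variables (Z : zmodType) (W : subgrp Z).

Lemma sgN x : W x -> W (- x).
Proof. by move=> Wx; rewrite -sub0r; apply: sgB => //; apply: sg0. Qed.

Lemma sgD x y : W x -> W y -> W (x + y).
Proof. by move=> Wx Wy; rewrite -[y]opprK; apply: sgB => //; apply: sgN. Qed.

Lemma sg_sum (I : eqType) (s : seq I) (F : I -> Z) :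
  (forall i, i \in s -> W (F i)) -> W (\sum_(i <- s) F i).
Proof.
elim: s => [|i s IH] Ws; first by rewrite big_nil; apply: sg0.
rewrite big_cons; apply: sgD; first by apply: Ws; rewrite mem_head.
by apply: IH => j sj; apply: Ws; rewrite inE sj orbT.
Qed.

(* The predicate is not decidable, so cosets are represented by a representative
   chosen with Hilbert's epsilon; equal cosets give extensionally equal predicates. *)
Definition coset_rep (y : Z) : Z := epsilon (inhabits 0) (fun z => W (z - y)).

Lemma coset_repP y : W (coset_rep y - y).
Proof.
apply: (epsilon_spec (inhabits 0) (fun z => W (z - y))).
by exists y; rewrite subrr; apply: sg0.
Qed.

Lemma coset_rep_eq y y' : W (y - y') -> coset_rep y = coset_rep y'.
Proof.
move=> Wyy'; rewrite /coset_rep.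
suff -> : (fun z => W (z - y)) = (fun z => W (z - y')) by [].
apply: functional_extensionality => z; apply: propositional_extensionality.
split=> Wz.
- have -> : z - y' = (z - y) + (y - y') by rewrite addrA subrK.
  by apply: sgD.
- have -> : z - y = (z - y') - (y - y') by rewrite opprB addrA subrK.
  by apply: sgB.
Qed.

Definition quot := {y : Z | coset_rep y == y}.
HB.instance Definition _ := Choice.on quot.

Definition qpi (y : Z) : quot :=
  exist _ (coset_rep y) (introT eqP (coset_rep_eq (coset_repP y))).

Lemma qpi_eq x y : qpi x = qpi y <-> W (x - y).
Proof.
split=> [/(congr1 val) /= Exy | Wxy]; last exact/val_inj/coset_rep_eq.
have -> : x - y = (coset_rep y - y) - (coset_rep x - x).
  by rewrite Exy opprB addrCA addrAC subrr add0r.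
by apply: sgB; apply: coset_repP.
Qed.

Lemma qpi_val q : qpi (val q) = q.
Proof. by apply: val_inj => /=; apply/eqP; case: q. Qed.

Lemma val_qpi y : W (val (qpi y) - y).
Proof. exact: coset_repP. Qed.

Lemma quot_ind (P : quot -> Prop) : (forall x, P (qpi x)) -> forall q, P q.
Proof. by move=> Pqpi q; rewrite -(qpi_val q). Qed.

Definition quot_add (p q : quot) := qpi (val p + val q).
Definition quot_opp (p : quot) := qpi (- val p).

Lemma quot_addE x y : quot_add (qpi x) (qpi y) = qpi (x + y).
Proof.
apply/qpi_eq; rewrite opprD addrACA.
by apply: sgD; apply: val_qpi.
Qed.

Lemma quot_oppE x : quot_opp (qpi x) = qpi (- x).
Proof. by apply/qpi_eq; rewrite -opprD; apply/sgN/val_qpi. Qed.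

Lemma quot_addA : associative quot_add.
Proof.
by elim/quot_ind=> x; elim/quot_ind=> y; elim/quot_ind=> z; rewrite !quot_addE addrA.
Qed.

Lemma quot_addC : commutative quot_add.
Proof. by elim/quot_ind=> x; elim/quot_ind=> y; rewrite !quot_addE addrC. Qed.

Lemma quot_add0 : left_id (qpi 0) quot_add.
Proof. by elim/quot_ind=> x; rewrite quot_addE add0r. Qed.

Lemma quot_addN : left_inverse (qpi 0) quot_opp quot_add.
Proof. by elim/quot_ind=> x; rewrite quot_oppE quot_addE addNr. Qed.

HB.instance Definition _ :=
  GRing.isZmodule.Build quot quot_addA quot_addC quot_add0 quot_addN.

Lemma qpiD x y : qpi (x + y) = qpi x + qpi y.
Proof. by rewrite -quot_addE. Qed.

Lemma qpi_eq0 x : qpi x = 0 <-> W x.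
Proof. by rewrite -[0]/(qpi 0) qpi_eq subr0. Qed.

End Quotient.

Section AdditiveMaps.
Variables (G H : zmodType) (f : G -> H).
Hypothesis f_add : additive_map f.

Lemma addm0 : f 0 = 0.
Proof. by apply: (addrI (f 0)); rewrite -f_add !addr0. Qed.

Lemma addmN x : f (- x) = - f x.
Proof. by apply: (addrI (f x)); rewrite -f_add !subrr addm0. Qed.

Lemma addmB x y : f (x - y) = f x - f y.
Proof. by rewrite f_add addmN. Qed.

Lemma addm_sum (I : Type) (s : seq I) (F : I -> G) :
  f (\sum_(i <- s) F i) = \sum_(i <- s) f (F i).
Proof.
elim: s => [|i s IH]; first by rewrite !big_nil addm0.
by rewrite !big_cons f_add IH.
Qed.

End AdditiveMaps.

Section Additivity.
Variable A : rng.

Lemma additive_rmull (c : A) : additive_map (fun x : A => rmul x c).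
Proof. by move=> x y; rewrite rmulDl. Qed.

Lemma additive_rmulr (c : A) : additive_map (rmul c).
Proof. by move=> x y; rewrite rmulDr. Qed.

Lemma additive_lactl (N : lmod A) (m : N) : additive_map (fun a => lact a m).
Proof. by move=> a b; rewrite lactDl. Qed.

Lemma additive_lactr (N : lmod A) (a : A) : additive_map (@lact A N a).
Proof. by move=> m n; rewrite lactDr. Qed.

Lemma additive_ractl (X : rmod A) (a : A) : additive_map (fun x : X => ract x a).
Proof. by move=> x y; rewrite ractDl. Qed.

Lemma additive_ractr (X : rmod A) (x : X) : additive_map (ract x).
Proof. by move=> a b; rewrite ractDr. Qed.

Variables (X : rmod A) (N : lmod A) (G : zmodType) (h : X -> N -> G).
Hypothesis h_bal : balanced h.

Lemma additive_bal_l (n : N) : additive_map (fun x => h x n).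
Proof. by move=> x y; rewrite h_bal.1. Qed.

Lemma additive_bal_r (x : X) : additive_map (h x).
Proof. by move=> m n; rewrite h_bal.2.1. Qed.

Lemma bal_ract x a n : h (ract x a) n = h x (lact a n).
Proof. exact: h_bal.2.2. Qed.

End Additivity.

Lemma balanced0 (A : rng) (X : rmod A) (N : lmod A) (G : zmodType) :
  balanced (fun (_ : X) (_ : N) => 0 : G).
Proof. by split; [|split] => *; rewrite ?addr0. Qed.

Section LocalUnits.
Variables (A : rng) (A_lu : has_local_units A).

Lemma local_unit_seq (s : seq A) :
  exists u, forall c, c \in s -> rmul c u = c /\ rmul u c = c.
Proof.
have [e [ee se]] := A_lu s; exists e => c /se [z ->].
by rewrite -!rmulA ee !rmulA ee.
Qed.

Lemma runital_local_unit (Y : rmod A) : runital Y ->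
  forall (ys : seq Y) (cs : seq A), exists u,
    (forall y, y \in ys -> ract y u = y) /\
    (forall c, c \in cs -> rmul c u = c /\ rmul u c = c).
Proof.
move=> Y_unital; elim=> [|y ys IH] cs.
  by have [u csu] := local_unit_seq cs; exists u.
have [s ys_def] := Y_unital y.
have [u [ysu csu]] := IH (map snd s ++ cs).
exists u; split=> [z|c cs_c]; last by apply: csu; rewrite mem_cat cs_c orbT.
rewrite inE => /predU1P [->|]; last exact: ysu.
rewrite {1}ys_def (addm_sum (additive_ractl u)) ys_def.
apply: eq_big_seq => p sp; rewrite -ractA.
by rewrite (csu p.2 _).1 // mem_cat map_f.
Qed.

End LocalUnits.

Section Ideals.
Variable A : rng.

Definition lideal_sg (I : A -> Prop) (I_ideal : left_ideal I) : subgrp A :=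
  SubGrp I_ideal.1 I_ideal.2.1.

Definition rspan (X : rmod A) (P : A -> Prop) (w : X) : Prop :=
  exists s : seq (X * A), (forall p, p \in s -> P p.2) /\ w = \sum_(p <- s) ract p.1 p.2.

Lemma rspan_ract (X : rmod A) (P : A -> Prop) (x : X) c : P c -> rspan P (ract x c).
Proof.
by move=> Pc; exists [:: (x, c)]; rewrite big_seq1; split=> // p /[!inE] /eqP ->.
Qed.

Lemma rspan0 (X : rmod A) (P : A -> Prop) : rspan P (0 : X).
Proof. by exists [::]; rewrite big_nil. Qed.

Lemma rspanB (X : rmod A) (P : A -> Prop) (x y : X) :
  rspan P x -> rspan P y -> rspan P (x - y).
Proof.
move=> [s [Ps ->]] [t [Pt ->]].
exists (s ++ map (fun p => (- p.1, p.2)) t); split.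
  by move=> p; rewrite mem_cat => /orP [/Ps | /mapP [q /Pt Pq ->]].
rewrite big_cat big_map -sumrN; congr (_ + _).
by apply: eq_bigr => p _; rewrite (addmN (additive_ractl p.2)).
Qed.

Definition rspan_sg (X : rmod A) (P : A -> Prop) : subgrp X :=
  SubGrp (@rspan0 X P) (@rspanB X P).

End Ideals.

Section QuotientModules.
Variable A : rng.

Section LeftQuotient.
Variables (W : subgrp A) (W_lmul : forall a x, W x -> W (rmul a x)).

Definition quot_lact (c : A) (q : quot W) : quot W := qpi W (rmul c (val q)).

Lemma quot_lactE c x : quot_lact c (qpi W x) = qpi W (rmul c x).
Proof. by apply/qpi_eq; rewrite -(addmB (additive_rmulr c)); apply/W_lmul/val_qpi. Qed.

Lemma quot_lactDl a b q : quot_lact (a + b) q = quot_lact a q + quot_lact b q.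
Proof. by elim/quot_ind: q => x; rewrite !quot_lactE rmulDl qpiD. Qed.

Lemma quot_lactDr a p q : quot_lact a (p + q) = quot_lact a p + quot_lact a q.
Proof.
by elim/quot_ind: p => x; elim/quot_ind: q => y; rewrite -qpiD !quot_lactE rmulDr qpiD.
Qed.

Lemma quot_lactA a b q : quot_lact (rmul a b) q = quot_lact a (quot_lact b q).
Proof. by elim/quot_ind: q => x; rewrite !quot_lactE rmulA. Qed.

Definition quot_lmod : lmod A := LMod quot_lactDl quot_lactDr quot_lactA.

End LeftQuotient.

Section RightQuotient.
Variables (W : subgrp A) (W_rmul : forall x c, W x -> W (rmul x c)).

Definition quot_ract (q : quot W) (c : A) : quot W := qpi W (rmul (val q) c).

Lemma quot_ractE x c : quot_ract (qpi W x) c = qpi W (rmul x c).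
Proof. by apply/qpi_eq; rewrite -(addmB (additive_rmull c)); apply/W_rmul/val_qpi. Qed.

Lemma quot_ractDl p q a : quot_ract (p + q) a = quot_ract p a + quot_ract q a.
Proof.
by elim/quot_ind: p => x; elim/quot_ind: q => y; rewrite -qpiD !quot_ractE rmulDl qpiD.
Qed.

Lemma quot_ractDr q a b : quot_ract q (a + b) = quot_ract q a + quot_ract q b.
Proof. by elim/quot_ind: q => x; rewrite !quot_ractE rmulDr qpiD. Qed.

Lemma quot_ractA q a b : quot_ract q (rmul a b) = quot_ract (quot_ract q a) b.
Proof. by elim/quot_ind: q => x; rewrite !quot_ractE rmulA. Qed.

Definition quot_rmod : rmod A := RMod quot_ractDl quot_ractDr quot_ractA.

End RightQuotient.

Definition regular_rmod : rmod A := RMod (@rmulDl A) (@rmulDr A) (fun x a b => rmulA x a b).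

End QuotientModules.

Definition lideal_quot (A : rng) (I : A -> Prop) (I_ideal : left_ideal I) : lmod A :=
  quot_lmod (W := lideal_sg I_ideal) I_ideal.2.2.

Section TensorByQuotient.
Variables (A : rng) (A_lu : has_local_units A).
Variables (I : A -> Prop) (I_ideal : left_ideal I).
Local Notation AI := (lideal_quot I_ideal).
Local Notation qI := (qpi (lideal_sg I_ideal)).

Lemma lideal_quot_lactE c x : lact c (qI x : AI) = qI (rmul c x).
Proof. exact: (@quot_lactE A (lideal_sg I_ideal) I_ideal.2.2). Qed.

Variables (Y : rmod A) (Y_unital : runital Y).
Local Notation qYI := (qpi (rspan_sg Y I)).

(* [Y (x)_A A/I] is realised as [Y / YI] with [y (x) (x + I) = y x + YI]. *)
Definition tens_quot (y : Y) (q : AI) : quot (rspan_sg Y I) := qYI (ract y (val q)).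

Lemma tens_quotE y x : tens_quot y (qI x) = qYI (ract y x).
Proof.
apply/qpi_eq; rewrite -(addmB (additive_ractr y)); apply: rspan_ract.
exact: (val_qpi (lideal_sg I_ideal)).
Qed.

Lemma tens_quot_balanced : balanced tens_quot.
Proof.
split; [|split].
- by move=> y y' q; rewrite /tens_quot ractDl qpiD.
- move=> y q q'; elim/quot_ind: q => x; elim/quot_ind: q' => x'.
  by rewrite -qpiD !tens_quotE ractDr qpiD.
- move=> y c q; elim/quot_ind: q => x.
  by rewrite lideal_quot_lactE !tens_quotE ractA.
Qed.

Section Universal.
Variables (G : zmodType) (h : Y -> AI -> G) (h_bal : balanced h).

Lemma balanced_runit_indep (y : Y) e e' :
  ract y e = y -> ract y e' = y -> h y (qI e) = h y (qI e').
Proof.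
move=> ye ye'; have [u eu] := local_unit_seq A_lu [:: e; e'].
suff absorb f : f \in [:: e; e'] -> ract y f = y -> h y (qI f) = h y (qI u).
  by rewrite (absorb e) ?(absorb e') ?inE ?eqxx ?orbT.
move=> ef yf.
by rewrite -{1}(eu f ef).1 -lideal_quot_lactE -bal_ract // yf.
Qed.

Definition runit_of (y : Y) : A := epsilon (inhabits 0) (fun e => ract y e = y).

Lemma runit_ofP y : ract y (runit_of y) = y.
Proof.
apply: (epsilon_spec (inhabits 0) (fun e => ract y e = y)).
have [u [yu _]] := runital_local_unit A_lu Y_unital [:: y] [::].
by exists u; apply: yu; rewrite mem_head.
Qed.

Definition tens_quot_lift (y : Y) : G := h y (qI (runit_of y)).

Lemma tens_quot_liftE y e : ract y e = y -> tens_quot_lift y = h y (qI e).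
Proof. exact/balanced_runit_indep/runit_ofP. Qed.

Lemma tens_quot_lift_additive : additive_map tens_quot_lift.
Proof.
move=> y y'; have [u [yu _]] := runital_local_unit A_lu Y_unital [:: y; y'] [::].
have yu1 : ract y u = y by apply: yu; rewrite mem_head.
have yu2 : ract y' u = y' by apply: yu; rewrite !inE eqxx orbT.
rewrite !(tens_quot_liftE (e := u)) ?ractDl ?yu1 ?yu2 //.
exact: h_bal.1.
Qed.

Lemma tens_quot_lift_rspan w : rspan I w -> tens_quot_lift w = 0.
Proof.
move=> [s [Is ->]]; have [u su] := local_unit_seq A_lu (map snd s).
have s_u p : p \in s -> rmul p.2 u = p.2 by move=> sp; exact: (su _ (map_f _ sp)).1.
rewrite (tens_quot_liftE (e := u)).
  rewrite (addm_sum (additive_bal_l h_bal _)); apply: big1_seq => p /andP [_ sp].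
  rewrite bal_ract // lideal_quot_lactE s_u //.
  by rewrite (proj2 (@qpi_eq0 _ (lideal_sg I_ideal) _) (Is p sp)) (addm0 (additive_bal_r h_bal _)).
rewrite (addm_sum (additive_ractl u)); apply: eq_big_seq => p sp.
by rewrite -ractA s_u.
Qed.

Lemma tens_quot_lift_qpi y : tens_quot_lift (val (qYI y)) = tens_quot_lift y.
Proof.
apply/eqP; rewrite -subr_eq0 -(addmB tens_quot_lift_additive).
by apply/eqP/tens_quot_lift_rspan/(val_qpi (rspan_sg Y I)).
Qed.

Lemma tens_quot_factor : exists phi : quot (rspan_sg Y I) -> G,
  additive_map phi /\ forall y q, phi (tens_quot y q) = h y q.
Proof.
exists (fun t => tens_quot_lift (val t)); split.
  move=> t t' /=; rewrite (tens_quot_lift_qpi (val t + val t')).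
  exact: tens_quot_lift_additive.
move=> y; elim/quot_ind => x; rewrite tens_quotE tens_quot_lift_qpi.
have [u [_ xu]] := runital_local_unit A_lu Y_unital [::] [:: x].
have xux : rmul x u = x by apply: (xu x (mem_head _ _)).1.
by rewrite (tens_quot_liftE (e := u)) -?ractA ?xux // bal_ract // lideal_quot_lactE xux.
Qed.

End Universal.

Lemma tens_quot_surj t : exists y q, t = tens_quot y q.
Proof.
have [u [tu _]] := runital_local_unit A_lu Y_unital [:: val t] [::].
exists (val t), (qI u); rewrite tens_quotE tu ?mem_head //.
by rewrite qpi_val.
Qed.

Lemma tensor_tens_quot : is_tensor tens_quot.
Proof.
split=> [|G h h_bal]; first exact: tens_quot_balanced.
split=> [|phi psi _ _ phi_h psi_h t]; first exact: tens_quot_factor.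
by have [y [q ->]] := tens_quot_surj t; rewrite phi_h psi_h.
Qed.

End TensorByQuotient.

Section TensorMaps.
Variables (A : rng) (N : lmod A).

Lemma tensor_map (Y Z : rmod A) (g : Y -> Z) (TY TZ : zmodType)
    (bY : Y -> N -> TY) (bZ : Z -> N -> TZ) :
  is_tensor bY -> is_tensor bZ -> rmod_hom g ->
  exists G : TY -> TZ, additive_map G /\ forall y n, G (bY y n) = bZ (g y) n.
Proof.
move=> tY [bZ_bal _] [g_add g_ract]; apply: (tY.2 _ _ _).1.
split; [|split] => [y y' n | y n n' | y a n] /=.
- by rewrite g_add bZ_bal.1.
- by rewrite bZ_bal.2.1.
- by rewrite g_ract bal_ract.
Qed.

Lemma flat_tensor_injective (Y Z : rmod A) (g : Y -> Z) : flat N ->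
  runital Y -> runital Z -> rmod_hom g -> (forall y, g y = 0 -> y = 0) ->
  forall (TY TZ : zmodType) (bY : Y -> N -> TY) (bZ : Z -> N -> TZ) (G : TY -> TZ),
  is_tensor bY -> is_tensor bZ -> additive_map G ->
  (forall y n, G (bY y n) = bZ (g y) n) -> forall t, G t = 0 -> t = 0.
Proof.
move=> N_flat Y_unital Z_unital g_hom g_inj TY TZ bY bZ G tY tZ G_add G_g t Gt0.
have zero_hom : rmod_hom (fun _ : Y => 0 : Y).
  by split=> [y y'|y a]; rewrite ?addr0 ?(addm0 (additive_ractl a)).
have exact0 : exact_at (fun _ : Y => 0 : Y) g.
  move=> y; split=> [/g_inj ->|[_ <-]]; first by exists 0.
  exact: (addm0 g_hom.1).
have zero_bY (y : Y) n : 0 = bY 0 n by rewrite (addm0 (additive_bal_l tY.1 n)).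
have FG_exact := N_flat _ _ _ _ _ Y_unital Y_unital Z_unital zero_hom g_hom exact0
  _ _ _ _ _ _ tY tY tZ (fun _ => 0) G (fun _ _ => esym (addr0 0)) G_add zero_bY G_g.
by have [_ <-] := (FG_exact t).1 Gt0.
Qed.

End TensorMaps.

Section SFImpliesRightUnits.
Variables (A : rng) (A_lu : has_local_units A).

Lemma lideal_quot_unital (I : A -> Prop) (I_ideal : left_ideal I) :
  lunital (lideal_quot I_ideal).
Proof.
elim/quot_ind => x; have [u xu] := local_unit_seq A_lu [:: x].
exists [:: (u, qpi (lideal_sg I_ideal) x)]; rewrite big_seq1 lideal_quot_lactE.
by rewrite (xu x (mem_head _ _)).2.
Qed.

Lemma maximal_lideal_quot_simple (I : A -> Prop) (I_max : maximal_left_ideal I) :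
  lsimple (lideal_quot I_max.1).
Proof.
have [_ [[a Ia] I_maxl]] := I_max; pose qI := qpi (lideal_sg I_max.1).
split=> [|P [P0 [PB PM]]].
  by exists (qI a); apply/eqP => /qpi_eq0.
pose J x := P (qI x).
have J_ideal : left_ideal J.
  split=> //; split=> [x y Jx Jy | c x Jx].
  - by rewrite /J /qI (addmB (@qpiD _ _)); apply: PB.
  - by rewrite /J /qI -lideal_quot_lactE; apply: PM.
have IJ x : I x -> J x by move=> Ix; rewrite /J /qI (proj2 (@qpi_eq0 _ (lideal_sg I_max.1) _) Ix).
case: (I_maxl J J_ideal IJ) => [JI|Jall]; [left|right]; elim/quot_ind => x.
- by move/JI => Ix; apply/qpi_eq0.
- exact: Jall.
Qed.

Section RightAnnihilator.
Variable a : A.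

Lemma rann_sg0 : rmul a 0 = 0.
Proof. exact: (addm0 (additive_rmulr a)). Qed.

Lemma rann_sgB x y : rmul a x = 0 -> rmul a y = 0 -> rmul a (x - y) = 0.
Proof. by move=> ax0 ay0; rewrite (addmB (additive_rmulr a)) ax0 ay0 subrr. Qed.

Definition rann_sg : subgrp A := SubGrp rann_sg0 rann_sgB.

Lemma rann_rmul x c : rann_sg x -> rann_sg (rmul x c).
Proof. by move=> /= ax0; rewrite rmulA ax0 (addm0 (additive_rmull c)). Qed.

Definition rann_quot : rmod A := quot_rmod rann_rmul.

Definition lmul_rann (q : rann_quot) : regular_rmod A := rmul a (val q).

Lemma lmul_rannE x : lmul_rann (qpi rann_sg x) = rmul a x.
Proof.
apply/eqP; rewrite -subr_eq0 -(addmB (additive_rmulr a)).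
exact/eqP/(val_qpi rann_sg).
Qed.

Lemma lmul_rann_hom : rmod_hom lmul_rann.
Proof.
split=> [p q | q c]; elim/quot_ind: q => x.
- by elim/quot_ind: p => y; rewrite -qpiD !lmul_rannE rmulDr.
- by rewrite /= (quot_ractE rann_rmul) !lmul_rannE rmulA.
Qed.

Lemma lmul_rann_inj q : lmul_rann q = 0 -> q = 0.
Proof. by elim/quot_ind: q => x; rewrite lmul_rannE => ax0; apply/qpi_eq0. Qed.

Lemma rann_quot_unital : runital rann_quot.
Proof.
elim/quot_ind => x; have [u xu] := local_unit_seq A_lu [:: x].
exists [:: (qpi rann_sg x, u)]; rewrite big_seq1 /= (quot_ractE rann_rmul).
by rewrite (xu x (mem_head _ _)).1.
Qed.

End RightAnnihilator.

Lemma regular_rmod_unital : runital (regular_rmod A).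
Proof.
move=> x; have [u xu] := local_unit_seq A_lu [:: x].
by exists [:: (x, u)]; rewrite big_seq1 /= (xu x (mem_head _ _)).1.
Qed.

Lemma left_SF_right_unit : left_SF A ->
  forall I : A -> Prop, maximal_left_ideal I ->
  forall a, I a -> exists b, I b /\ rmul a b = a.
Proof.
move=> A_SF I I_max a Ia; pose I_ideal := I_max.1.
have AI_flat := A_SF _ (lideal_quot_unital (I_ideal := I_ideal))
  (maximal_lideal_quot_simple I_max).
have Y_unital := rann_quot_unital (a := a).
have tY := tensor_tens_quot A_lu I_ideal Y_unital.
have tZ := tensor_tens_quot A_lu I_ideal regular_rmod_unital.
have [G [G_add G_g]] := tensor_map tY tZ (lmul_rann_hom a).
have [e ea] := local_unit_seq A_lu [:: a]; have [ae_a ea_a] := ea a (mem_head _ _).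
pose t := tens_quot (qpi (rann_sg a) e : rann_quot a) (qpi (lideal_sg I_ideal) e).
have Gt0 : G t = 0.
  rewrite G_g lmul_rannE ae_a tens_quotE; apply/qpi_eq0.
  by rewrite /= ae_a -ea_a; apply: rspan_ract.
have := flat_tensor_injective AI_flat Y_unital regular_rmod_unital
  (lmul_rann_hom a) (@lmul_rann_inj a) tY tZ G_add G_g Gt0.
rewrite /t tens_quotE => /qpi_eq0 [s [Is e_s]].
exists (\sum_(p <- s) rmul (val p.1) p.2); split.
  by apply: (sg_sum (W := lideal_sg I_ideal)) => p sp; apply/I_ideal.2.2/Is.
move: (congr1 (@lmul_rann a) e_s); rewrite (lmul_rann_hom a).2 lmul_rannE /= ae_a ae_a.
move=> a_sum; rewrite [RHS]a_sum (addm_sum (lmul_rann_hom a).1) (addm_sum (additive_rmulr a)).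
by apply: eq_bigr => p _; rewrite (lmul_rann_hom a).2 /= rmulA.
Qed.

End SFImpliesRightUnits.

Section CyclicModules.
Variables (A : rng) (N : lmod A).

Definition generates (n : N) : Prop := forall m : N, exists a, m = lact a n.

Definition lann (n : N) : A -> Prop := fun a => lact a n = 0.

Lemma lann_ideal n : left_ideal (lann n).
Proof.
split; first exact: (addm0 (additive_lactl n)).
split=> [x y xn yn | b x xn]; rewrite /lann.
- by rewrite (addmB (additive_lactl n)) xn yn subrr.
- by rewrite lactA xn (addm0 (additive_lactr b)).
Qed.

Lemma lsimple_cyclic : lunital N -> lsimple N -> exists n, generates n.
Proof.
move=> N_unital [[n n_neq0] N_simple].
have killed_by_A_eq0 (m : N) : (forall a, lact a m = 0) -> m = 0.
  have killed_sub : lsubmod (fun m : N => forall a, lact a m = 0).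
    split=> [a|]; first exact: (addm0 (additive_lactr a)).
    split=> [x y xA yA a | b x xA a]; last by rewrite -lactA xA.
    by rewrite (addmB (additive_lactr a)) xA yA subrr.
  case: (N_simple _ killed_sub) => [killed0 | all_killed]; first exact: killed0.
  exfalso; move/eqP: n_neq0; apply; have [s ->] := N_unital n.
  by rewrite big1 // => p _; apply: all_killed.
have [a an_neq0] : exists a, lact a n <> 0.
  apply: NNPP => none; move/eqP: n_neq0; apply; apply: killed_by_A_eq0 => a.
  by apply: NNPP => an_neq0; apply: none; exists a.
have An_sub : lsubmod (fun m : N => exists c, m = lact c n).
  split; first by exists 0; rewrite (addm0 (additive_lactl n)).
  split=> [x y [c ->] [d ->] | b x [c ->]].
  - by exists (c - d); rewrite (addmB (additive_lactl n)).
  - by exists (rmul b c); rewrite lactA.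
exists n; case: (N_simple _ An_sub) => [An0 | //].
by case: an_neq0; apply: An0; exists a.
Qed.

Lemma lann_maximal n : lsimple N -> generates n -> maximal_left_ideal (lann n).
Proof.
move=> [[m m_neq0] N_simple] n_gen; split; first exact: lann_ideal.
split.
  have [a m_def] := n_gen m; exists a => an0.
  by move/eqP: m_neq0; rewrite m_def.
move=> J [J0 [JB JM]] lann_J.
have Jn_sub : lsubmod (fun m : N => exists j, J j /\ m = lact j n).
  split; first by exists 0; rewrite (addm0 (additive_lactl n)).
  split=> [x y [c [Jc ->]] [d [Jd ->]] | b x [c [Jc ->]]].
  - by exists (c - d); rewrite (addmB (additive_lactl n)); split; first exact: JB.
  - by exists (rmul b c); rewrite lactA; split; first exact: JM.
case: (N_simple _ Jn_sub) => [Jn0 | Jn_all]; [left | right] => x.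
- by split=> [Jx | /lann_J //]; apply: Jn0; exists x.
- have [j [Jj xn_jn]] := Jn_all (lact x n).
  have x_j_lann : lann n (x - j) by rewrite /lann (addmB (additive_lactl n)) xn_jn subrr.
  have := JB _ _ (lann_J _ x_j_lann) (JB _ _ J0 Jj).
  by rewrite sub0r opprK subrK.
Qed.

End CyclicModules.

Lemma lideal_right_unit_seq (A : rng) (I : A -> Prop) : left_ideal I ->
  (forall a, I a -> exists b, I b /\ rmul a b = a) ->
  forall s : seq A, (forall x, x \in s -> I x) ->
  exists b, I b /\ forall x, x \in s -> rmul x b = x.
Proof.
move=> I_ideal right_unit; pose Ig := lideal_sg I_ideal.
elim=> [|a s IH] Is; first by exists 0; split=> //; apply: (sg0 Ig).
have [b [Ib s_b]] := IH (fun x sx => Is x (mem_behead (s := a :: s) sx)).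
have Ia : I a by apply: Is; rewrite mem_head.
(* [b + c - bc] is a right unit for [a] if [c] is one for [a - ab], and stays one on [s]. *)
have [c [Ic ab_c]] := right_unit _ (sgB (s := Ig) Ia (I_ideal.2.2 a b Ib)).
exists (b + c - rmul b c); split; first by apply: (sgB (s := Ig)); [apply: sgD | apply: I_ideal.2.2].
move=> x /predU1P [-> | sx].
- rewrite (addmB (additive_rmulr a)) rmulDr rmulA.
  move: ab_c; rewrite (addmB (additive_rmull c)) => ab_c.
  by rewrite -[rmul a c](subrK (rmul (rmul a b) c)) ab_c addrA addrK addrC subrK.
- by rewrite (addmB (additive_rmulr x)) rmulDr rmulA s_b // addrK.
Qed.

Section TensorMapsCyclic.
Variables (A : rng) (N : lmod A).

Lemma tensor_map_comp0 (X Y Z : rmod A) (f : X -> Y) (g : Y -> Z)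
    (TX TY TZ : zmodType) (bX : X -> N -> TX) (bY : Y -> N -> TY) (bZ : Z -> N -> TZ)
    (F : TX -> TY) (G : TY -> TZ) :
  (forall x, g (f x) = 0) -> is_tensor bX -> is_tensor bZ ->
  additive_map F -> additive_map G ->
  (forall x n, F (bX x n) = bY (f x) n) -> (forall y n, G (bY y n) = bZ (g y) n) ->
  forall t, G (F t) = 0.
Proof.
move=> gf0 tX tZ F_add G_add F_f G_g.
apply: ((tX.2 _ _ (balanced0 X N TZ)).2 (fun t => G (F t)) (fun _ => 0)).
- by move=> t t'; rewrite F_add G_add.
- by move=> t t'; rewrite addr0.
- by move=> x n; rewrite F_f G_g gf0 (addm0 (additive_bal_l tZ.1 n)).
- by [].
Qed.

Variables (n : N) (n_gen : generates n).

Lemma tensor_generated (Y : rmod A) (TY : zmodType) (bY : Y -> N -> TY) :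
  is_tensor bY -> forall t, exists y, t = bY y n.
Proof.
move=> tY t.
have Yn0 : exists y, 0 = bY y n by exists 0; rewrite (addm0 (additive_bal_l tY.1 n)).
have YnB u v : (exists y, u = bY y n) -> (exists y, v = bY y n) -> exists y, u - v = bY y n.
  by move=> [y ->] [y' ->]; exists (y - y'); rewrite (addmB (additive_bal_l tY.1 n)).
pose Yn := SubGrp Yn0 YnB.
(* The projection onto [TY / (Y (x) n)] and the zero map agree on every [y (x) a n]. *)
suff /qpi_eq0 : qpi Yn t = 0 by [].
apply: ((tY.2 _ _ (balanced0 Y N _)).2 (qpi Yn) (fun _ => 0)).
- exact: qpiD.
- by move=> u v; rewrite addr0.
- move=> y m; apply/qpi_eq0; have [c ->] := n_gen m.
  by exists (ract y c); rewrite (bal_ract tY.1).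
- by [].
Qed.

Definition gen_coef (m : N) : A := epsilon (inhabits 0) (fun a => m = lact a n).

Lemma gen_coefP m : m = lact (gen_coef m) n.
Proof. exact: (epsilon_spec (inhabits 0) (fun a => m = lact a n) (n_gen m)). Qed.

Lemma rspan_lann_sub (Z : rmod A) : runital Z ->
  forall (z : Z) u, lact u n = n -> rspan (lann n) (z - ract z u).
Proof.
move=> Z_unital z u un; have [s z_def] := Z_unital z.
exists (map (fun p => (p.1, p.2 - rmul p.2 u)) s); split.
  by move=> _ /mapP [p _ ->]; rewrite /lann (addmB (additive_lactl n)) lactA un subrr.
rewrite big_map z_def (addm_sum (additive_ractl u)) -sumrB.
by apply: eq_bigr => p _; rewrite -ractA (addmB (additive_ractr p.1)).
Qed.

Lemma tensor_generated_eq0 (Z : rmod A) (TZ : zmodType) (bZ : Z -> N -> TZ) :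
  runital Z -> is_tensor bZ -> forall z, bZ z n = 0 -> rspan (lann n) z.
Proof.
move=> Z_unital tZ z zn0; pose ZI := rspan_sg Z (lann n).
have coef_eq (z' : Z) c c' :
    lact c n = lact c' n -> qpi ZI (ract z' c) = qpi ZI (ract z' c').
  move=> cc'; apply/qpi_eq; rewrite -(addmB (additive_ractr z')); apply: rspan_ract.
  by rewrite /lann (addmB (additive_lactl n)) cc' subrr.
(* [z (x) a n] is sent to [z a + Z ann(n)], well defined by [coef_eq]. *)
pose h (z' : Z) (m : N) := qpi ZI (ract z' (gen_coef m)).
have h_bal : balanced h.
  split; [|split] => [x x' m | x m m' | x c m]; rewrite /h.
  - by rewrite ractDl qpiD.
  - by rewrite -qpiD -ractDr; apply: coef_eq; rewrite lactDl -!gen_coefP.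
  - by rewrite -ractA; apply: coef_eq; rewrite lactA -!gen_coefP.
have [phi [phi_add phi_h]] := (tZ.2 _ h h_bal).1.
have z_coef : rspan (lann n) (ract z (gen_coef n)).
  by apply/(qpi_eq0 ZI); rewrite -/(h z n) -phi_h zn0 (addm0 phi_add).
rewrite -[z](subrK (ract z (gen_coef n))); apply: (sgD (W := ZI)) z_coef.
exact/rspan_lann_sub/esym/gen_coefP.
Qed.

End TensorMapsCyclic.

Lemma right_unit_left_SF (A : rng) :
  (forall I : A -> Prop, maximal_left_ideal I ->
     forall a, I a -> exists b, I b /\ rmul a b = a) -> left_SF A.
Proof.
move=> right_unit N N_unital N_simple.
have [n n_gen] := lsimple_cyclic N_unital N_simple.
have lann_max := lann_maximal N_simple n_gen.
move=> X Y Z f g _ _ Z_unital _ g_hom fg_exact TX TY TZ bX bY bZ tX tY tZ F G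
  F_add G_add F_f G_g t.
split=> [Gt0 | [x <-]]; last first.
  apply: (tensor_map_comp0 _ tX tZ F_add G_add F_f G_g) => x'.
  by apply/fg_exact; exists x'.
have [y t_def] := tensor_generated n_gen tY t.
have [s [s_lann gy_def]] : rspan (lann n) (g y).
  by apply: (tensor_generated_eq0 n_gen Z_unital tZ); rewrite -G_g -t_def.
have [b [bn0 s_b]] : exists b, lann n b /\ forall c, c \in map snd s -> rmul c b = c.
  apply: (lideal_right_unit_seq lann_max.1 (right_unit _ lann_max)).
  by move=> _ /mapP [p sp ->]; apply: s_lann.
have gy_b : ract (g y) b = g y.
  rewrite gy_def (addm_sum (additive_ractl b)); apply: eq_big_seq => p sp.
  by rewrite -ractA s_b ?map_f.
have [x fx] : exists x, f x = y - ract y b.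
  by apply/fg_exact; rewrite (addmB g_hom.1) g_hom.2 gy_b subrr.
exists (bX x n); rewrite t_def F_f fx (addmB (additive_bal_l tY.1 n)) (bal_ract tY.1) bn0.
by rewrite (addm0 (additive_bal_r tY.1 y)) subr0.
Qed.

Theorem theorem2p6 (A : rng) (hA : has_local_units A) :
  left_SF A <->
  (forall I : A -> Prop, maximal_left_ideal I ->
     forall a : A, I a -> exists b : A, I b /\ rmul a b = a).
Proof. by split; [apply: left_SF_right_unit | apply: right_unit_left_SF]. Qed.
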